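(* Let $\Gamma$ be the 3-hypergraph with vertex set $\mathbb{F}_7=\{0,1,\dots,6\}$ whose edges are the 14 triples $\{0,1,3\},\{0,2,6\},\{0,2,3\},\{0,4,5\},\{0,1,5\},\{0,4,6\},\{1,2,4\},\{2,3,5\},\{3,4,6\},\{1,5,6\},\{1,3,4\},\{2,4,5\},\{3,5,6\},\{1,2,6\}$ (this is one of the two orbits of $\mathrm{AGL}_1(7)=\{x\mapsto ax+b: a\in\mathbb{F}_7^*,b\in\mathbb{F}_7\}$ on 3-subsets). Then $\Gamma$ is set-homogeneous but not homogeneous.
   Context: A 3-hypergraph is a pair $(X,E)$ with $E$ a set of 3-element subsets (edges). It is set-homogeneous if for every $t\ge1$, whenever $U,V\subseteq X$ with $|U|=|V|=t$ carry isomorphic induced subhypergraphs there is an automorphism $g$ with $U^g=V$; homogeneous if every isomorphism between induced subhypergraphs extends to an automorphism. *)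

From mathcomp Require Import all_boot all_fingroup.
Set Implicit Arguments. Unset Strict Implicit. Unset Printing Implicit Defensive.

Definition is_3hypergraph (T : finType) (E : {set {set T}}) : Prop :=
  forall A, A \in E -> #|A| = 3.

Definition induced_iso (T : finType) (E : {set {set T}}) (U V : {set T})
  (f : T -> T) : Prop :=
  [/\ {in U &, injective f}, f @: U = V &
      forall A : {set T}, A \subset U -> (A \in E) = (f @: A \in E)].

Definition hautomorphism (T : finType) (E : {set {set T}}) (g : {perm T}) : Prop :=
  forall A : {set T}, (A \in E) = (g @: A \in E).

Definition set_homogeneous (T : finType) (E : {set {set T}}) : Prop :=
  forall U V : {set T}, 1 <= #|U| -> #|U| = #|V| ->
    (exists f, induced_iso E U V f) ->
    exists g : {perm T}, hautomorphism E g /\ g @: U = V.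

Definition homogeneous (T : finType) (E : {set {set T}}) : Prop :=
  forall (U V : {set T}) (f : T -> T), induced_iso E U V f ->
    exists g : {perm T}, hautomorphism E g /\ {in U, forall x, g x = f x}.

Definition gamma_triples : seq (nat * nat * nat) :=
  [:: (0,1,3); (0,2,6); (0,2,3); (0,4,5); (0,1,5); (0,4,6); (1,2,4);
      (2,3,5); (3,4,6); (1,5,6); (1,3,4); (2,4,5); (3,5,6); (1,2,6)].

Definition Gamma : {set {set 'I_7}} :=
  [set A : {set 'I_7} | A \in [seq [set (inord t.1.1 : 'I_7); inord t.1.2; inord t.2]
                                 | t <- gamma_triples]].

From mathcomp Require Import all_boot all_fingroup ssralg zmodp.
Set Implicit Arguments. Unset Strict Implicit. Unset Printing Implicit Defensive.

(* The affine group AGL_1(7), generated by x |-> x + 1 and x |-> 3 x, acts on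
   Gamma by automorphisms, and two subsets lie in the same orbit as soon as they
   have the same size and contain the same number of edges.  An isomorphism
   between induced subhypergraphs preserves both numbers, so Gamma is
   set-homogeneous.  It is not homogeneous: the transposition (1 2) preserves
   the two edges {0,1,3}, {0,2,3} inside {0,1,2,3}, but an automorphism g
   extending it would send the edges {0,1,5}, {1,2,4}, {1,5,6} to edges
   {0,2,g5}, {1,2,g4}, {2,g5,g6}; this forces g5 = 6, g4 = 4, g6 = 5, and
   {2,5,6} is not an edge. *)

Section ImsetIn.

Variables (aT rT : finType) (f : aT -> rT) (U : {set aT}).

Lemma imset_inj_in : {in U &, injective f} ->
  {in [pred A : {set aT} | A \subset U] &, injective (fun A : {set aT} => f @: A)}.
Proof.
move=> f_inj.
suff sub (A B : {set aT}) :
    A \subset U -> B \subset U -> f @: A = f @: B -> A \subset B.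
  by move=> A B /[!inE] sAU sBU fAB; apply/eqP; rewrite eqEsubset (sub A B) // (sub B A).
move=> sAU sBU fAB; apply/subsetP => x xA.
have /imsetP[y yB fxy] : f x \in f @: B by rewrite -fAB imset_f.
by rewrite (f_inj x y (subsetP sAU x xA) (subsetP sBU y yB) fxy).
Qed.

Lemma imset_restricted_preimset (B : {set rT}) :
  B \subset f @: U -> f @: [set x in U | f x \in B] = B.
Proof.
move=> sBfU; apply/setP => y; apply/imsetP/idP => [[x /[!inE] /andP[_ fxB] ->] //|yB].
have /imsetP[x xU fx] := subsetP sBfU y yB.
by exists x; rewrite // inE xU -fx.
Qed.

End ImsetIn.

Section HypergraphAutomorphisms.

Variables (T : finType) (E : {set {set T}}).

Definition haut : {set {perm T}} :=
  [set g : {perm T} | [forall A : {set T}, (A \in E) == (g @: A \in E)]].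

Lemma hautP g : reflect (hautomorphism E g) (g \in haut).
Proof.
rewrite inE; apply: (iffP forallP) => hg A; first exact/eqP.
by rewrite hg.
Qed.

Lemma group_set_haut : group_set haut.
Proof.
apply/group_setP; split.
  by apply/hautP => A; rewrite (eq_imset _ (@perm1 _)) imset_id.
move=> g h /hautP hg /hautP hh; apply/hautP => A.
by rewrite hg hh -imset_comp (eq_imset _ (fun x => esym (permM g h x))).
Qed.

Canonical haut_group := group group_set_haut.

Definition edges_in (U : {set T}) := [set A in E | A \subset U].

Lemma card_edges_in_induced_iso U V f :
  induced_iso E U V f -> #|edges_in U| = #|edges_in V|.
Proof.
case=> f_inj fUV f_edges.
have imsetE_inj : {in edges_in U &, injective (fun A : {set T} => f @: A)}.
  by apply: sub_in2 (imset_inj_in f_inj) => A /[!inE] /andP[].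
rewrite -(card_in_imset imsetE_inj); apply: eq_card => B.
apply/imsetP/idP => [[A /[!inE] /andP[EA sAU] ->]|].
  by rewrite -f_edges // EA -fUV imsetS.
rewrite inE => /andP[EB sBV].
have sBfU : B \subset f @: U by rewrite fUV.
have sAU : [set x in U | f x \in B] \subset U by apply/subsetP => x /[!inE] /andP[].
exists [set x in U | f x \in B]; last by rewrite imset_restricted_preimset.
by rewrite inE sAU f_edges // imset_restricted_preimset // EB.
Qed.

Lemma haut_induced_iso g (U : {set T}) : g \in haut -> induced_iso E U (g @: U) g.
Proof. by move=> /hautP hg; split=> // x y _ _; apply: perm_inj. Qed.

Lemma card_edges_in_haut g (U : {set T}) :
  g \in haut -> #|edges_in (g @: U)| = #|edges_in U|.
Proof. by move=> hg; rewrite (card_edges_in_induced_iso (haut_induced_iso U hg)). Qed.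

Lemma set_homogeneous_of_representatives (reps : seq {set T}) :
  {in reps &, injective (fun R : {set T} => (#|R|, #|edges_in R|))} ->
  (forall U : {set T}, exists2 g, g \in haut & g @: U \in reps) ->
  set_homogeneous E.
Proof.
move=> reps_inj to_rep U V _ cardUV [f isoUV].
have [gU hgU repU] := to_rep U; have [gV hgV repV] := to_rep V.
have sameR : gU @: U = gV @: V.
  apply: reps_inj => //; congr (_, _).
    by rewrite !card_imset ?cardUV //; apply: perm_inj.
  by rewrite !card_edges_in_haut // (card_edges_in_induced_iso isoUV).
exists (gU * gV^-1)%g; split; first by apply/hautP; rewrite groupM ?groupV.
rewrite (eq_imset _ (permM gU gV^-1)) imset_comp sameR -imset_comp.
by rewrite (eq_imset _ (permK gV)) imset_id.
Qed.

End HypergraphAutomorphisms.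

Lemma imset_set3 (aT rT : finType) (f : aT -> rT) (x y z : aT) :
  f @: [set x; y; z] = [set f x; f y; f z].
Proof. by rewrite imsetU imsetU1 !imset_set1. Qed.

Local Notation pt n := (@inord 6 n).

Implicit Types A B R U : {set 'I_7}.

(* Finite checks on Gamma are run by computation on this encoding: [inord] and
   finset operations on {set 'I_7} do not reduce to values in practice. *)
Definition bits (A : {set 'I_7}) : bitseq := [seq pt i \in A | i <- iota 0 7].

Lemma size_bits A : size (bits A) = 7.
Proof. by rewrite size_map size_iota. Qed.

Lemma nth_bits A i : i < 7 -> nth false (bits A) i = (pt i \in A).
Proof. by move=> lt_i7; rewrite (nth_map 0) ?size_iota ?nth_iota. Qed.

Lemma mem_bits A x : (x \in A) = nth false (bits A) x.
Proof. by rewrite nth_bits ?inord_val. Qed.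

Lemma bits_inj : injective bits.
Proof. by move=> A B eqAB; apply/setP => x; rewrite !mem_bits eqAB. Qed.

Lemma card_bits A : #|A| = count id (bits A).
Proof.
rewrite cardE size_filter count_map -val_enum_ord count_map enumT.
by apply: eq_count => x /=; rewrite inord_val.
Qed.

Definition subbits (s u : bitseq) :=
  all (fun i => nth false s i ==> nth false u i) (iota 0 7).

Lemma subset_bits A B : (A \subset B) = subbits (bits A) (bits B).
Proof.
apply/subsetP/allP => [sAB i /[!mem_iota] /andP[_ lt_i7]|sAB x].
  by rewrite !nth_bits //; apply/implyP/sAB.
by rewrite !mem_bits; apply/implyP/sAB; rewrite mem_iota /=.
Qed.

Definition indicator (s : seq nat) : bitseq := [seq i \in s | i <- iota 0 7].

Definition nset (s : seq nat) : {set 'I_7} := [set x : 'I_7 | nat_of_ord x \in s].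

Lemma bits_nset s : bits (nset s) = indicator s.
Proof.
by apply/eq_in_map => i /[!mem_iota] /andP[_ lt_i7]; rewrite inE /= inordK.
Qed.

Lemma set3_nset (x y z : 'I_7) :
  [set x; y; z] = nset [:: nat_of_ord x; nat_of_ord y; nat_of_ord z].
Proof. by apply/setP => w; rewrite !inE !val_eqE orbA. Qed.

Fixpoint bitseqs n : seq bitseq :=
  if n is n'.+1 then [seq b :: s | b <- [:: true; false], s <- bitseqs n']
  else [:: [::]].

Lemma mem_bitseqs s : s \in bitseqs (size s).
Proof.
by elim: s => //= b s IHs; case: b; rewrite !mem_cat map_f ?orbT.
Qed.

Lemma bits_in_bitseqs A : bits A \in bitseqs 7.
Proof. by rewrite -(size_bits A) mem_bitseqs. Qed.

Definition nat_model (g : 'I_7 -> 'I_7) (gf : nat -> nat) :=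
  forall i, i < 7 -> nat_of_ord (g (pt i)) = gf i.

Definition imgbits (gf : nat -> nat) (s : bitseq) : bitseq :=
  [seq has (fun j => nth false s j && (gf j == i)) (iota 0 7) | i <- iota 0 7].

Lemma bits_imset g gf A : nat_model g gf -> bits (g @: A) = imgbits gf (bits A).
Proof.
move=> gm; apply/eq_in_map => i /[!mem_iota] /andP[_ lt_i7].
apply/imsetP/hasP => [[x xA /(congr1 (@nat_of_ord 7))]|[j /[!mem_iota] /andP[_ lt_j7]]].
  rewrite inordK // => gx; exists (nat_of_ord x); first by rewrite mem_iota /=.
  by rewrite -mem_bits xA -(gm _ (ltn_ord x)) inord_val gx eqxx.
move=> /andP[jA /eqP gfj]; exists (pt j); first by rewrite mem_bits inordK.
by apply: ord_inj; rewrite gm // gfj inordK.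
Qed.

Lemma nat_modelM (g h : {perm 'I_7}) gf hf :
  nat_model g gf -> nat_model h hf -> nat_model (g * h)%g (hf \o gf).
Proof.
by move=> gm hm i lt_i7; rewrite permM -[g _]inord_val (hm _ (ltn_ord _)) gm.
Qed.

Lemma nat_modelX (g : {perm 'I_7}) gf n :
  nat_model g gf -> nat_model (g ^+ n)%g (iter n gf).
Proof.
move=> gm; elim: n => [|n IHn] i lt_i7; first by rewrite expg0 perm1 inordK.
by rewrite expgSr (nat_modelM IHn gm).
Qed.

Definition gamma_edges : seq {set 'I_7} :=
  [seq [set inord t.1.1; inord t.1.2; inord t.2] | t <- gamma_triples].

Definition gamma_bits : seq bitseq :=
  [seq indicator [:: t.1.1; t.1.2; t.2] | t <- gamma_triples].

Lemma Gamma_edges A : (A \in Gamma) = (A \in gamma_edges).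
Proof. by rewrite inE. Qed.

Lemma map_bits_gamma_edges : map bits gamma_edges = gamma_bits.
Proof.
have triples_lt7 : all (fun t => [&& t.1.1 < 7, t.1.2 < 7 & t.2 < 7]) gamma_triples.
  by [].
rewrite -map_comp; apply/eq_in_map => t /(allP triples_lt7) /and3P[lt1 lt2 lt3].
by rewrite /= set3_nset bits_nset !inordK.
Qed.

Lemma mem_Gamma A : (A \in Gamma) = (bits A \in gamma_bits).
Proof. by rewrite Gamma_edges -map_bits_gamma_edges (mem_map bits_inj). Qed.

Lemma mem_Gamma3 (x y z : 'I_7) :
  ([set x; y; z] \in Gamma) =
  (indicator [:: nat_of_ord x; nat_of_ord y; nat_of_ord z] \in gamma_bits).
Proof. by rewrite mem_Gamma set3_nset bits_nset. Qed.

Lemma card_edges_in_Gamma R :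
  #|edges_in Gamma R| = count (subbits^~ (bits R)) gamma_bits.
Proof.
have uniq_edges : uniq gamma_edges.
  by rewrite -(map_inj_uniq bits_inj) map_bits_gamma_edges; vm_compute.
rewrite -map_bits_gamma_edges count_map -size_filter.
rewrite -(card_uniqP (filter_uniq _ uniq_edges)).
by apply: eq_card => A; rewrite in_set Gamma_edges mem_filter /= subset_bits andbC.
Qed.

Lemma haut_Gamma_bits (g : {perm 'I_7}) gf : nat_model g gf ->
  all (fun s => (s \in gamma_bits) == (imgbits gf s \in gamma_bits)) (bitseqs 7) ->
  g \in haut Gamma.
Proof.
move=> gm aut_bits; apply/hautP => A; rewrite !mem_Gamma (bits_imset _ gm).
exact/eqP/(allP aut_bits _ (bits_in_bitseqs A)).
Qed.

Lemma is_3hypergraph_Gamma : is_3hypergraph Gamma.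
Proof.
have card3 : all (fun s => count id s == 3) gamma_bits by [].
by move=> A; rewrite mem_Gamma card_bits => /(allP card3) /eqP.
Qed.

Lemma unit3 : (3 : 'I_7)%R \is a GRing.unit.
Proof. by []. Qed.

Definition shift : {perm 'I_7} := perm (@GRing.addIr _ (1 : 'I_7)%R).
Definition scale : {perm 'I_7} := perm (GRing.mulrI unit3).

Definition shift_nat i := i.+1 %% 7.
Definition scale_nat i := 3 * i %% 7.

Lemma shift_model : nat_model shift shift_nat.
Proof. by move=> i lt_i7; rewrite permE /= inordK // addn1. Qed.

Lemma scale_model : nat_model scale scale_nat.
Proof. by move=> i lt_i7; rewrite permE /= inordK. Qed.

Lemma shift_haut : shift \in haut Gamma.
Proof. by apply: haut_Gamma_bits shift_model _; vm_compute. Qed.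

Lemma scale_haut : scale \in haut Gamma.
Proof. by apply: haut_Gamma_bits scale_model _; vm_compute. Qed.

(* One subset from each orbit of AGL_1(7) on the subsets of F_7. *)
Definition rep_supports : seq (seq nat) :=
  [:: [::]; [:: 0]; [:: 0; 1]; [:: 0; 1; 2]; [:: 0; 1; 3]; [:: 0; 1; 2; 3];
      [:: 0; 1; 2; 4]; iota 0 5; iota 0 6; iota 0 7].

Definition reps : seq {set 'I_7} := map nset rep_supports.

Lemma reps_invariant_inj :
  {in reps &, injective (fun R : {set 'I_7} => (#|R|, #|edges_in Gamma R|))}.
Proof.
pose inv s := (count id (indicator s), count (subbits^~ (indicator s)) gamma_bits).
have inv_inj : all (fun s => all (fun s' => (inv s == inv s') ==> (s == s'))
  rep_supports) rep_supports by vm_compute.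
move=> _ _ /mapP[s s_rep ->] /mapP[s' s'_rep ->].
rewrite !card_bits !card_edges_in_Gamma !bits_nset => /eqP inv_ss'.
by rewrite (eqP (implyP (allP (allP inv_inj s s_rep) s' s'_rep) inv_ss')).
Qed.

Lemma affine_to_reps : all (fun s => has (fun a => has (fun b =>
    imgbits (iter b shift_nat \o iter a scale_nat) s
      \in map indicator rep_supports) (iota 0 7)) (iota 0 6)) (bitseqs 7).
Proof. by vm_compute. Qed.

Lemma haut_Gamma_to_reps (U : {set 'I_7}) :
  exists2 g, g \in haut Gamma & g @: U \in reps.
Proof.
have /hasP[a _ /hasP[b _ repU]] := allP affine_to_reps _ (bits_in_bitseqs U).
exists (scale ^+ a * shift ^+ b)%g.
  by rewrite groupM ?groupX ?scale_haut ?shift_haut.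
rewrite -(mem_map bits_inj) -map_comp (eq_map bits_nset).
have affine_model := nat_modelM (nat_modelX a scale_model) (nat_modelX b shift_model).
by rewrite (bits_imset _ affine_model).
Qed.

Definition swap12 : {perm 'I_7} := tperm (pt 1) (pt 2).

Definition swap12_nat i := if i == 1 then 2 else if i == 2 then 1 else i.

Lemma swap12_model : nat_model swap12 swap12_nat.
Proof.
move=> i lt_i7; rewrite /swap12 permE /= !(fun_if (@nat_of_ord 7)).
by rewrite -!(inj_eq (@ord_inj 7)) !inordK.
Qed.

Definition U0 : {set 'I_7} := nset (iota 0 4).

Lemma swap12_induced_iso : induced_iso Gamma U0 U0 swap12.
Proof.
have swap12_bits : all (fun s => subbits s (indicator (iota 0 4)) ==>
  ((s \in gamma_bits) == (imgbits swap12_nat s \in gamma_bits))) (bitseqs 7).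
  by vm_compute.
split; first by move=> x y _ _; apply: perm_inj.
  by apply: bits_inj; rewrite (bits_imset _ swap12_model) bits_nset.
move=> A; rewrite subset_bits bits_nset !mem_Gamma (bits_imset _ swap12_model) => sAU0.
exact/eqP/(implyP (allP swap12_bits _ (bits_in_bitseqs A))).
Qed.

Lemma no_injective_edge_images : all (fun a => all (fun b => all (fun c =>
    [&& indicator [:: 0; 2; b] \in gamma_bits, indicator [:: 2; 1; a] \in gamma_bits
      & indicator [:: 2; b; c] \in gamma_bits] ==> ~~ uniq [:: 0; 2; 1; 3; a; b; c])
  (iota 0 7)) (iota 0 7)) (iota 0 7).
Proof. by vm_compute. Qed.

Lemma swap12_not_extendable (g : {perm 'I_7}) :
  g \in haut Gamma -> ~ {in U0, forall x, g x = swap12 x}.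
Proof.
move=> /hautP g_aut g_ext.
have g0123 : [/\ nat_of_ord (g (pt 0)) = 0, nat_of_ord (g (pt 1)) = 2,
                nat_of_ord (g (pt 2)) = 1 & nat_of_ord (g (pt 3)) = 3].
  have gval i : i < 4 -> nat_of_ord (g (pt i)) = swap12_nat i.
    move=> lt_i4; have lt_i7 : i < 7 by apply: leq_trans lt_i4 _.
    by rewrite g_ext ?swap12_model // inE inordK // mem_iota.
  by split; rewrite gval.
case: g0123 => g0 g1 g2 g3.
have edge_image i j k : i < 7 -> j < 7 -> k < 7 ->
    indicator [:: i; j; k] \in gamma_bits ->
    indicator [:: nat_of_ord (g (pt i)); nat_of_ord (g (pt j)); nat_of_ord (g (pt k))]
      \in gamma_bits.
  by move=> lt_i7 lt_j7 lt_k7; rewrite -mem_Gamma3 -imset_set3 -g_aut mem_Gamma3 !inordK.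
have e015 := edge_image 0 1 5 isT isT isT isT.
have e124 := edge_image 1 2 4 isT isT isT isT.
have e156 := edge_image 1 5 6 isT isT isT isT.
have g_uniq : uniq [seq nat_of_ord (g (pt i)) | i <- iota 0 7].
  rewrite map_inj_in_uniq ?iota_uniq // => i j /[!mem_iota] /andP[_ lt_i7] /andP[_ lt_j7].
  by move=> /ord_inj /perm_inj /(congr1 (@nat_of_ord 7)); rewrite !inordK.
rewrite [iota _ _]/= [map _ _]/= g0 g1 g2 g3 in g_uniq.
rewrite g0 g1 in e015; rewrite g1 g2 in e124; rewrite g1 in e156.
have in_iota7 (x : 'I_7) : nat_of_ord x \in iota 0 7 by rewrite mem_iota ltn_ord.
have := allP (allP (allP no_injective_edge_images _ (in_iota7 (g (pt 4))))
                    _ (in_iota7 (g (pt 5)))) _ (in_iota7 (g (pt 6))).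
by rewrite e015 e124 e156 g_uniq.
Qed.

Theorem mainTheorem16 :
  is_3hypergraph Gamma /\ set_homogeneous Gamma /\ ~ homogeneous Gamma.
Proof.
split; first exact: is_3hypergraph_Gamma.
split.
  exact: set_homogeneous_of_representatives reps_invariant_inj haut_Gamma_to_reps.
move=> homogeneous_Gamma.
have [g [/hautP g_aut g_ext]] := homogeneous_Gamma _ _ _ swap12_induced_iso.
exact: swap12_not_extendable g_aut g_ext.
Qed.
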